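(* Let $X$ be a real Hilbert space, let $D$ be a nonempty subset of $X$, let $T\colon D\to X$, let $\alpha\in\,]0,+\infty[$, set $A=T^{-1}-\mathrm{Id}$ (so $T=J_A$) and $\rho=\tfrac{1}{2\alpha}-1>-1$. Then: (i) $T$ is $\alpha$-conically nonexpansive $\iff$ $A$ is $\rho$-comonotone. (ii) [$T$ is $\alpha$-conically nonexpansive and $D=X$] $\iff$ $A$ is maximally $\rho$-comonotone. (iii) $T$ is nonexpansive $\iff$ $A$ is $(-\tfrac12)$-comonotone. (iv) [$T$ is nonexpansive and $D=X$] $\iff$ $A$ is maximally $(-\tfrac12)$-comonotone. If moreover $\alpha\in\,]0,1[$, equivalently $\rho>-\tfrac12$, then also: (v) $T$ is $\alpha$-averaged $\iff$ $A$ is $\rho$-comonotone. (vi) [$T$ is $\alpha$-averaged and $D=X$] $\iff$ $A$ is maximally $\rho$-comonotone.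
   Context: For $T\colon D\to X$, $T^{-1}$ is the set-valued inverse and $J_A=(\mathrm{Id}+A)^{-1}$. A map $N\colon D\to X$ is nonexpansive if $\|Nx-Ny\|\le\|x-y\|$ for all $x,y\in D$. For $\alpha>0$, $T$ is $\alpha$-conically nonexpansive if $T=(1-\alpha)\mathrm{Id}+\alpha N$ for some nonexpansive $N\colon D\to X$; for $\alpha\in]0,1[$, $\alpha$-averaged means the same. For $\rho\in\mathbb R$, $A\colon X\rightrightarrows X$ is $\rho$-comonotone if $\langle x-y,u-v\rangle\ge\rho\|u-v\|^2$ for all $(x,u),(y,v)\in\operatorname{gra}A$; maximally $\rho$-comonotone if moreover no $\rho$-comonotone operator has a graph properly containing $\operatorname{gra}A$. *)

From HB Require Import structures.
From mathcomp Require Import all_boot all_order all_algebra.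
From mathcomp Require Import all_classical all_reals.
Set Implicit Arguments. Unset Strict Implicit. Unset Printing Implicit Defensive.
Import Order.TTheory GRing.Theory Num.Theory.
Local Open Scope classical_set_scope.
Local Open Scope ring_scope.

Section Hilbert.
Variables (R : realType) (V : lmodType R).

Definition ipnorm (ip : V -> V -> R) (x : V) : R := Num.sqrt (ip x x).

Record is_hilbert (ip : V -> V -> R) : Prop := IsHilbert {
  ip_sym : forall x y, ip x y = ip y x;
  ip_linl : forall (a : R) x y z, ip (a *: x + y) z = a * ip x z + ip y z;
  ip_ge0 : forall x, 0 <= ip x x;
  ip_eq0 : forall x, ip x x = 0 -> x = 0;
  ip_complete : forall s : nat -> V,
    (forall e : R, 0 < e -> exists N : nat, forall m n : nat,
        (N <= m)%N -> (N <= n)%N -> ipnorm ip (s m - s n) < e) ->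
    exists l : V, forall e : R, 0 < e -> exists N : nat, forall n : nat,
        (N <= n)%N -> ipnorm ip (s n - l) < e
}.

(* set-valued operators X ⇉ X are represented as V -> set V *)
Definition setinv (D : set V) (T : V -> V) : V -> set V :=
  fun x => [set y | D y /\ T y = x].

Definition sub_id (B : V -> set V) : V -> set V :=
  fun x => [set y - x | y in B x].

Definition nonexpansive (ip : V -> V -> R) (D : set V) (N : V -> V) : Prop :=
  forall x y, D x -> D y -> ipnorm ip (N x - N y) <= ipnorm ip (x - y).

Definition conically_nonexpansive (ip : V -> V -> R) (D : set V)
    (alpha : R) (T : V -> V) : Prop :=
  0 < alpha /\ exists N : V -> V, nonexpansive ip D N /\
    forall x, D x -> T x = (1 - alpha) *: x + alpha *: N x.

Definition averaged (ip : V -> V -> R) (D : set V) (alpha : R) (T : V -> V)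
  : Prop := 0 < alpha < 1 /\ conically_nonexpansive ip D alpha T.

Definition comonotone (ip : V -> V -> R) (rho : R) (A : V -> set V) : Prop :=
  forall x u y v, A x u -> A y v ->
    rho * (ipnorm ip (u - v)) ^+ 2 <= ip (x - y) (u - v).

Definition max_comonotone (ip : V -> V -> R) (rho : R) (A : V -> set V)
  : Prop :=
  comonotone ip rho A /\
  forall B : V -> set V, comonotone ip rho B ->
    (forall x, A x `<=` B x) -> forall x, B x `<=` A x.

End Hilbert.

From HB Require Import structures.
From mathcomp Require Import all_boot all_order all_algebra.
From mathcomp Require Import all_classical all_reals.
From mathcomp Require Import ring lra.
Set Implicit Arguments. Unset Strict Implicit. Unset Printing Implicit Defensive.
Import Order.TTheory GRing.Theory Num.Theory.
Local Open Scope classical_set_scope.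
Local Open Scope ring_scope.

(* Put N s t := alpha^-1 (t - (1 - alpha) s), so that t = (1 - alpha) s + alpha N s t;
   T is alpha-conically nonexpansive on D iff x |-> N x (T x) is nonexpansive on D.
   The pairs of gra A are (T s, s - T s) with s in D, and for two of them an algebraic
   identity turns rho |u - v|^2 <= <x - y, u - v> into |N s x - N s' y| <= |s - s'|.
   This gives (i); (iii)-(vi) are the cases alpha = 1 and alpha < 1.
   If D = X, a rho-comonotone operator containing gra A adds no pair, because two
   comonotone pairs with the same sum x + u coincide when rho > -1.  If A is maximal
   and z is any point, the Kirszbraun-Valentine theorem extends x |-> N x (T x)
   nonexpansively to z, the corresponding pair at z can be added to gra A, so z is in D.
   Kirszbraun-Valentine is proved first for finitely many points, taking as value at z
   the barycenter of the y_i for weights that nearly maximise a concave potential on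
   the simplex.  In general, the values meeting finitely many constraints up to a slack
   form nested closed convex sets, whose near-minimal-norm points converge by the
   parallelogram law and completeness. *)

Section Slack.
Context {R : realType}.

Definition eps (n : nat) : R := n.+1%:R^-1.

Lemma eps_gt0 n : 0 < eps n.
Proof. by rewrite invr_gt0 ltr0Sn. Qed.

Lemma eps_le n m : (n <= m)%N -> eps m <= eps n.
Proof. by move=> nm; rewrite lef_pV2 ?posrE ?ltr0Sn // ler_nat ltnS. Qed.

Lemma eps_le1 n : eps n <= 1.
Proof. by rewrite invf_le1 ?ltr0Sn // ler1n. Qed.

Lemma exists_mul_eps_le (b e : R) : 0 < e -> exists n, b * eps n <= e.
Proof.
move=> e_gt0; exists (Num.truncn (b / e)).
rewrite ler_pdivrMr ?ltr0Sn // mulrC -ler_pdivrMr //.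
exact/ltW/truncnS_gt.
Qed.

Lemma ler_addMeps (x a b : R) : (forall n, x <= a + b * eps n) -> x <= a.
Proof.
move=> h; apply/ler_addgt0Pr => e e_gt0.
have [n hn] := exists_mul_eps_le b e_gt0.
by apply: le_trans (h n) _; rewrite lerD2l.
Qed.

Lemma ler_addpM (x a b : R) : (forall t, 0 < t -> x <= a + t * b) -> x <= a.
Proof. by move=> h; apply: (ler_addMeps (b := b)) => n; rewrite mulrC h ?eps_gt0. Qed.

End Slack.

Section Delta.
Variables (R : pzSemiRingType) (W : lSemiModType R) (k : nat).

Lemma sumr_delta (F : 'I_k -> R) j : \sum_i (i == j)%:R * F i = F j.
Proof.
rewrite (bigD1 j) //= eqxx mul1r big1 ?addr0 // => i /negbTE ->.
by rewrite mul0r.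
Qed.

Lemma sumr_delta1 (j : 'I_k) : \sum_i ((i == j)%:R : R) = 1.
Proof. by rewrite -[RHS](sumr_delta (fun=> 1) j); apply: eq_bigr => i _; rewrite mulr1. Qed.

Lemma sumr_deltaZ (F : 'I_k -> W) j : \sum_i ((i == j)%:R : R) *: F i = F j.
Proof.
rewrite (bigD1 j) //= eqxx scale1r big1 ?addr0 // => i /negbTE ->.
by rewrite scale0r.
Qed.

End Delta.

Lemma nonexpansive_conic1 (R : realType) (V : lmodType R) (ip : V -> V -> R)
    (D : set V) (T : V -> V) :
  nonexpansive ip D T <-> conically_nonexpansive ip D 1 T.
Proof.
split=> [T_ne | [_ [N [N_ne TN]]] x y Dx Dy].
  by split=> //; exists T; split=> // x _; rewrite subrr scale0r add0r scale1r.
by rewrite !TN // subrr !scale0r !add0r !scale1r; exact: N_ne.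
Qed.

Lemma averaged_conic (R : realType) (V : lmodType R) (ip : V -> V -> R)
    (D : set V) (T : V -> V) (alpha : R) :
  0 < alpha < 1 -> averaged ip D alpha T <-> conically_nonexpansive ip D alpha T.
Proof. by move=> alpha01; split=> [[]|]. Qed.

Lemma sub_id_setinvE (R : realType) (V : lmodType R) (D : set V) (T : V -> V) s t :
  sub_id (setinv D T) t (s - t) <-> D s /\ T s = t.
Proof. by split=> [[s' [Ds' <-] /addIr <-]|[Ds <-]] //; exists s. Qed.

Section InnerProduct.
Variables (R : realType) (V : lmodType R) (ip : V -> V -> R).
Hypothesis Hip : is_hilbert ip.

Local Notation "'[ u , v ]" := (ip u v) : ring_scope.
Local Notation "'[ u ]" := (ip u u) : ring_scope.

Lemma ipDl x y z : '[x + y, z] = '[x, z] + '[y, z].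
Proof. by have := ip_linl Hip 1 x y z; rewrite scale1r mul1r. Qed.

Lemma ip0l z : '[0, z] = 0.
Proof. by have := ipDl 0 0 z; rewrite addr0; lra. Qed.

Lemma ipZl a x z : '[a *: x, z] = a * '[x, z].
Proof. by have := ip_linl Hip a x 0 z; rewrite addr0 ip0l addr0. Qed.

Lemma ipNl x z : '[- x, z] = - '[x, z].
Proof. by rewrite -scaleN1r ipZl mulN1r. Qed.

Lemma ipDr x y z : '[z, x + y] = '[z, x] + '[z, y].
Proof. by rewrite ip_sym // ipDl // !(ip_sym Hip z). Qed.

Lemma ipZr a x z : '[z, a *: x] = a * '[z, x].
Proof. by rewrite ip_sym // ipZl // (ip_sym Hip z). Qed.

Lemma ipNr x z : '[z, - x] = - '[z, x].
Proof. by rewrite ip_sym // ipNl // (ip_sym Hip z). Qed.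

Lemma ip0r z : '[z, 0] = 0.
Proof. by rewrite ip_sym // ip0l. Qed.

Definition ipE := (ipDl, ipDr, ipZl, ipZr, ipNl, ipNr, ip0l, ip0r).

Lemma sqnN x : '[- x] = '[x].
Proof. by rewrite ipNl ipNr opprK. Qed.

Lemma sqnBC x y : '[x - y] = '[y - x].
Proof. by rewrite -sqnN opprB. Qed.

Lemma sqnD x y : '[x + y] = '[x] + 2 * '[x, y] + '[y].
Proof. by rewrite !ipE (ip_sym Hip y x); ring. Qed.

Lemma sqnB x y : '[x - y] = '[x] - 2 * '[x, y] + '[y].
Proof. by rewrite sqnD ipNr sqnN; ring. Qed.

Lemma ip_young u v t : 0 < t -> 2 * '[u, v] <= t * '[u] + t^-1 * '[v].
Proof.
move=> t_gt0; have := ip_ge0 Hip (t *: u - v); rewrite sqnB !ipE => h.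
rewrite -(ler_pM2l t_gt0).
have -> : t * (t * '[u] + t^-1 * '[v]) = t * t * '[u] + '[v] by field; rewrite gt_eqF.
lra.
Qed.

Lemma sqn_triangle a b c t : 0 < t ->
  '[a - c] <= (1 + t) * '[a - b] + (1 + t^-1) * '[b - c].
Proof.
move=> t_gt0; have -> : a - c = (a - b) + (b - c) by rewrite addrA subrK.
rewrite sqnD.
have := ip_young (a - b) (b - c) t_gt0; lra.
Qed.

Lemma sqn_triangle2 a b c : '[a - c] <= 2 * '[a - b] + 2 * '[b - c].
Proof. by have := sqn_triangle a b c ltr01; rewrite invr1. Qed.

Lemma sqn_midpoint u v : '[2^-1 *: (u + v)] = ('[u] + '[v]) / 2 - '[u - v] / 4.
Proof. by rewrite !ipE (ip_sym Hip v u); field. Qed.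

Lemma ipnorm_sqr x : ipnorm ip x ^+ 2 = '[x].
Proof. by rewrite sqr_sqrtr // ip_ge0. Qed.

Lemma ler_ipnorm x y : (ipnorm ip x <= ipnorm ip y) = ('[x] <= '[y]).
Proof. by rewrite ler_sqrt // ip_ge0. Qed.

Lemma ltr_ipnorm x e : 0 < e -> (ipnorm ip x < e) = ('[x] < e ^+ 2).
Proof. by move=> e_gt0; rewrite -[RHS]ltr_sqrt ?exprn_gt0 // sqrtr_sqr gtr0_norm. Qed.

Lemma sqn_le_of_near a b (r c : R) : 0 <= c ->
  (forall n, exists q, '[a - q] <= r + eps n /\ '[q - b] <= c * eps n) ->
  '[a - b] <= r.
Proof.
move=> c_ge0 near; apply: (ler_addpM (b := r)) => t t_gt0.
apply: (ler_addMeps (b := (1 + t) + (1 + t^-1) * c)) => n.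
have [q [aq qb]] := near n.
have one_t_ge0 : 0 <= 1 + t by lra.
have one_tinv_ge0 : 0 <= 1 + t^-1 by rewrite addr_ge0 ?invr_ge0 ?ltW.
have := sqn_triangle a q b t_gt0.
have := ler_wpM2l one_t_ge0 aq; have := ler_wpM2l one_tinv_ge0 qb.
lra.
Qed.

Lemma cauchy_rate_lim (w : nat -> V) (c : R) : 0 <= c ->
  (forall n m, (n <= m)%N -> '[w n - w m] <= c * eps n) ->
  exists l, forall n, '[w n - l] <= c * eps n.
Proof.
move=> c_ge0 w_cauchy.
have [l w_lim] : exists l, forall e, 0 < e ->
    exists N, forall n, (N <= n)%N -> ipnorm ip (w n - l) < e.
  apply: ip_complete => // e e_gt0.
  have e2_gt0 : 0 < e ^+ 2 / 2 by rewrite divr_gt0 ?exprn_gt0.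
  have [N hN] := exists_mul_eps_le c e2_gt0.
  exists N => m n Nm Nn; rewrite ltr_ipnorm //.
  have close : '[w m - w n] <= c * eps N.
    have [mn|nm] := leqP m n.
      by apply: le_trans (w_cauchy _ _ mn) _; rewrite ler_wpM2l ?eps_le.
    by rewrite sqnBC; apply: le_trans (w_cauchy _ _ (ltnW nm)) _; rewrite ler_wpM2l ?eps_le.
  have := exprn_gt0 2 e_gt0; lra.
exists l => n; apply: (sqn_le_of_near (c := 1)) => // m.
have sqrt_gt0 : 0 < Num.sqrt (eps m : R) by rewrite sqrtr_gt0 eps_gt0.
have [N hN] := w_lim _ sqrt_gt0.
exists (w (maxn N n)); split.
  by apply: le_trans (w_cauchy _ _ (leq_maxr N n)) _; rewrite lerDl ltW ?eps_gt0.
have := hN _ (leq_maxl N n); rewrite ltr_ipnorm // sqr_sqrtr => [/ltW|].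
  by rewrite mul1r.
exact/ltW/eps_gt0.
Qed.

Lemma comonotone_pair_eq (rho : R) x u x' u' : -1 < rho -> x + u = x' + u' ->
  rho * ipnorm ip (u - u') ^+ 2 <= '[x - x', u - u'] -> u = u'.
Proof.
move=> rho_gt x_u /[!ipnorm_sqr].
have -> : x - x' = - (u - u') by apply/eqP; rewrite -addr_eq0 addrACA -opprD x_u subrr.
rewrite ipNl => h.
have : (rho + 1) * '[u - u'] <= 0 by lra.
rewrite pmulr_rle0 => [le0|]; last by rewrite -ltrBlDr sub0r.
by apply/eqP; rewrite -subr_eq0; apply/eqP/(ip_eq0 Hip)/le_anti; rewrite le0 ip_ge0.
Qed.

Section Barycenter.
Variable k : nat.
Implicit Types (a : 'I_k -> R) (v : 'I_k -> V).

Definition barycenter a v := \sum_i a i *: v i.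

Lemma ip_sumZr u a v : '[u, \sum_i a i *: v i] = \sum_i a i * '[u, v i].
Proof.
rewrite (big_morph (ip u) (fun x y => ipDr x y u) (ip0r u)).
by apply: eq_bigr => i _; exact: ipZr.
Qed.

Lemma sum_sqn_barycenter a v x : \sum_i a i = 1 ->
  \sum_i a i * '[x - v i] =
  \sum_i a i * '[barycenter a v - v i] + '[x - barycenter a v].
Proof.
move=> a_sum; set b := barycenter a v.
have centered : \sum_i a i *: (b - v i) = 0.
  under eq_bigr do rewrite scalerBr.
  by rewrite sumrB -scaler_suml a_sum scale1r subrr.
rewrite (eq_bigr (fun i => a i * '[x - b] + 2 * (a i * '[x - b, b - v i])
                          + a i * '[b - v i])); last first.
  move=> i _; have -> : x - v i = (x - b) + (b - v i) by rewrite addrA subrK.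
  by rewrite sqnD; ring.
rewrite !big_split /= -big_distrl /= a_sum mul1r -big_distrr /= -ip_sumZr centered ip0r.
ring.
Qed.

Lemma sum2_sqn_barycenter a v : \sum_i a i = 1 ->
  \sum_j a j * (\sum_i a i * '[v j - v i]) =
  2 * \sum_i a i * '[barycenter a v - v i].
Proof.
move=> a_sum; under eq_bigr do rewrite sum_sqn_barycenter // mulrDr sqnBC.
by rewrite big_split /= -big_distrl /= a_sum mul1r; ring.
Qed.

End Barycenter.

Section FiniteExtension.
Variables (k : nat) (d y : 'I_k -> V) (z : V).
Hypothesis y_lip : forall i j, '[y i - y j] <= '[d i - d j].
Implicit Types (a : 'I_k -> R).

Definition simplex a := (forall i, 0 <= a i) /\ \sum_i a i = 1.

Definition excess i w := '[w - y i] - '[z - d i].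

Definition potential a := \sum_i a i * excess i (barycenter a y).

Definition transfer a i j t l := a l + t * ((l == j)%:R - (l == i)%:R).

Lemma sum_excess a x : \sum_i a i = 1 ->
  \sum_i a i * excess i x = potential a + '[x - barycenter a y].
Proof.
move=> a_sum; rewrite /potential /excess.
under eq_bigr do rewrite mulrBr.
under [in RHS]eq_bigr do rewrite mulrBr.
by rewrite !sumrB sum_sqn_barycenter //; ring.
Qed.

Lemma potential_le0 a : simplex a -> potential a <= 0.
Proof.
case=> a_ge0 a_sum.
have y_le_d : \sum_j a j * (\sum_i a i * '[y j - y i]) <=
              \sum_j a j * (\sum_i a i * '[d j - d i]).
  apply: ler_sum => j _; apply: ler_wpM2l => //; apply: ler_sum => i _.
  exact: ler_wpM2l.
rewrite !sum2_sqn_barycenter // in y_le_d.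
have -> : potential a =
    \sum_i a i * '[barycenter a y - y i] - \sum_i a i * '[z - d i].
  by rewrite -sumrB; apply: eq_bigr => i _; rewrite mulrBr.
have := sum_sqn_barycenter d z a_sum; have := ip_ge0 Hip (z - barycenter a d).
lra.
Qed.

Lemma sum_transfer a i j t : \sum_l transfer a i j t l = \sum_l a l.
Proof. by rewrite big_split /= -mulr_sumr sumrB !sumr_delta1 subrr mulr0 addr0. Qed.

Lemma sum_transferM a i j t (F : 'I_k -> R) :
  \sum_l transfer a i j t l * F l = \sum_l a l * F l + t * (F j - F i).
Proof.
under eq_bigr do rewrite mulrDl -mulrA mulrBl.
by rewrite big_split /= -mulr_sumr sumrB !sumr_delta.
Qed.

Lemma barycenter_transfer a i j t v :
  barycenter (transfer a i j t) v = barycenter a v + t *: (v j - v i).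
Proof.
rewrite /barycenter; under eq_bigr do rewrite scalerDl -scalerA scalerBl.
by rewrite big_split /= -scaler_sumr sumrB !sumr_deltaZ.
Qed.

Lemma simplex_transfer a i j t : simplex a -> 0 <= t <= a i ->
  simplex (transfer a i j t).
Proof.
case=> a_ge0 a_sum /andP[t_ge0 t_le]; split; last by rewrite sum_transfer.
move=> l; rewrite /transfer; have := a_ge0 l.
by case: (l == i) / eqP => [->|_]; case: (_ == j); rewrite /= ?mulr1n ?mulr0n; lra.
Qed.

Lemma potential_transfer a i j t : \sum_l a l = 1 ->
  let w := barycenter a y in
  potential (transfer a i j t) =
  potential a + t * (excess j w - excess i w) - t ^+ 2 * '[y j - y i].
Proof.
move=> a_sum w; have := sum_excess w (etrans (sum_transfer a i j t) a_sum).
rewrite sum_transferM sum_excess // subrr ip0l addr0 barycenter_transfer.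
have -> : w - (w + t *: (y j - y i)) = - (t *: (y j - y i)) by rewrite opprD addNKr.
rewrite sqnN !ipE; lra.
Qed.

Lemma excess_le_near_max a eta th C j : simplex a ->
  (forall b, simplex b -> potential b <= potential a + eta) ->
  (forall i l, '[y i - y l] <= C) -> 0 < th <= 1 ->
  th * excess j (barycenter a y) <= k%:R * (eta + th ^+ 2 * C).
Proof.
move=> a_simplex a_max yC /andP[th_gt0 th_le1]; have [a_ge0 a_sum] := a_simplex.
set w := barycenter a y.
have a_le1 i : a i <= 1 by rewrite -a_sum (bigD1 i) //= lerDl sumr_ge0.
(* test near-maximality against moving the mass th * a i from i to j *)
have step i : th * a i * (excess j w - excess i w) <= eta + th ^+ 2 * C.
  have t_range : 0 <= th * a i <= a i.
    by apply/andP; split; [exact: mulr_ge0 (ltW th_gt0) (a_ge0 i) | exact: ler_piMl].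
  have := a_max _ (simplex_transfer j a_simplex t_range).
  rewrite potential_transfer // -/w => moved.
  have : (th * a i) ^+ 2 * '[y j - y i] <= th ^+ 2 * C.
    rewrite exprMn -mulrA ler_wpM2l ?sqr_ge0 // (le_trans _ (yC j i)) //.
    by rewrite ler_piMl ?ip_ge0 // expr_le1.
  lra.
have sum_step : th * (excess j w - potential a) =
    \sum_i th * a i * (excess j w - excess i w).
  rewrite [RHS](eq_bigr (fun i => th * excess j w * a i - th * (a i * excess i w))).
    by rewrite sumrB -!mulr_sumr a_sum mulr1 mulrBr.
  by move=> i _; ring.
have : \sum_i th * a i * (excess j w - excess i w) <= \sum_(i < k) (eta + th ^+ 2 * C).
  exact: ler_sum.
rewrite sumr_const card_ord -mulr_natl -sum_step.
have : th * potential a <= 0 by rewrite pmulr_rle0 // potential_le0.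
lra.
Qed.

Lemma exists_near_max eta : (0 < k)%N -> 0 < eta ->
  exists2 a, simplex a & forall b, simplex b -> potential b <= potential a + eta.
Proof.
move=> k_gt0 eta_gt0; pose S := [set potential a | a in simplex].
have S_sup : has_sup S.
  split; last by exists 0 => _ [a a_simplex <-]; exact: potential_le0.
  pose vertex l : R := (l == Ordinal k_gt0)%:R.
  exists (potential vertex), vertex => //.
  by split=> [l|]; rewrite ?ler0n ?sumr_delta1.
have [_ [a a_simplex <-] a_near] := sup_adherent eta_gt0 S_sup.
exists a => // b b_simplex.
have : potential b <= sup S by apply: sup_upper_bound => //; exists b.
lra.
Qed.

Lemma finite_extension e : 0 < e ->
  exists w, forall j, '[w - y j] <= '[z - d j] + e.
Proof.
move=> e_gt0; have [k0|k_gt0] := posnP k.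
  by exists 0 => -[j j_lt]; exfalso; rewrite k0 in j_lt.
pose C := \sum_i \sum_l '[y i - y l].
have C_ge0 : 0 <= C by do 2![apply: sumr_ge0 => ? _]; exact: ip_ge0.
have yC i l : '[y i - y l] <= C.
  rewrite /C (bigD1 i) //= (bigD1 l) //= -addrA lerDl.
  by rewrite addr_ge0 ?sumr_ge0 // => *; rewrite ?sumr_ge0 // => *; exact: ip_ge0.
pose K : R := k%:R; have K_gt0 : 0 < K by rewrite ltr0n.
(* th and eta make both terms of excess_le_near_max at most th * e / 2 *)
pose th := e / (e + 2 * K * C).
have KC_ge0 : 0 <= 2 * K * C by rewrite mulr_ge0 // mulr_ge0 // ltW.
have den_gt0 : 0 < e + 2 * K * C by lra.
have thE : th * (e + 2 * K * C) = e by rewrite mulfVK ?gt_eqF.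
have th_gt0 : 0 < th by rewrite divr_gt0.
have th_le1 : th <= 1 by rewrite ler_pdivrMr // mul1r lerDl.
pose eta := th * e / (2 * K).
have eta_gt0 : 0 < eta by apply: divr_gt0; apply: mulr_gt0; rewrite ?ltr0n.
have etaE : K * eta = th * e / 2 by rewrite /eta; field; rewrite gt_eqF.
have KthC : K * th * C <= e / 2 by have := mulr_ge0 (ltW th_gt0) (ltW e_gt0); lra.
have [a a_simplex a_max] := exists_near_max k_gt0 eta_gt0.
exists (barycenter a y) => j.
have := excess_le_near_max j a_simplex a_max yC (introT andP (conj th_gt0 th_le1)).
rewrite -/K [K * _]mulrDr etaE => bound.
have : th * excess j (barycenter a y) <= th * e.
  by have := ler_wpM2l (ltW th_gt0) KthC; lra.
by rewrite ler_pM2l // /excess; lra.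
Qed.

End FiniteExtension.

Section OnePointExtension.
Variables (D : set V) (N : V -> V) (z : V).
Hypothesis N_lip : forall x y, D x -> D y -> '[N x - N y] <= '[x - y].

Definition inD (F : seq V) := {in F, forall x, D x}.

Definition feasible (F : seq V) (n : nat) : set V :=
  [set p | {in F, forall x, '[p - N x] <= '[z - x] + eps n}].

Definition feasible_inf F n := inf [set '[p] | p in feasible F n].

Lemma feasible_neq0 F n : inD F -> feasible F n !=set0.
Proof.
move=> FD; pose x (i : 'I_(size F)) := nth 0 F i.
have x_lip i j : '[N (x i) - N (x j)] <= '[x i - x j].
  by apply: N_lip; apply: FD; rewrite mem_nth.
have [w hw] := finite_extension z x_lip (eps_gt0 n).
exists w => p pF; have p_idx : (index p F < size F)%N by rewrite index_mem.
by have := hw (Ordinal p_idx); rewrite /x /= nth_index.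
Qed.

Lemma feasible_anti F G n m : {subset F <= G} -> (n <= m)%N ->
  feasible G m `<=` feasible F n.
Proof.
move=> FG nm p p_feas x xF; apply: le_trans (p_feas x (FG x xF)) _.
by rewrite lerD2l eps_le.
Qed.

Lemma feasible_midpoint F n p q : feasible F n p -> feasible F n q ->
  feasible F n (2^-1 *: (p + q)).
Proof.
move=> p_feas q_feas x xF.
have -> : 2^-1 *: (p + q) - N x = 2^-1 *: ((p - N x) + (q - N x)).
  have halfE : 2^-1 *: (N x + N x) = N x.
    by rewrite -mulr2n -scaler_nat scalerA mulVf ?scale1r // pnatr_eq0.
  by rewrite addrACA -opprD scalerBr halfE.
rewrite sqn_midpoint opprB addrA subrK.
have := p_feas x xF; have := q_feas x xF; have := ip_ge0 Hip (p - q); lra.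
Qed.

Lemma feasible_inf_le F n p : feasible F n p -> feasible_inf F n <= '[p].
Proof.
move=> p_feas; apply: ge_inf; last by exists p.
by exists 0 => _ [q _ <-]; exact: ip_ge0.
Qed.

Lemma feasible_inf_mono F G n m : inD G -> {subset F <= G} -> (n <= m)%N ->
  feasible_inf F n <= feasible_inf G m.
Proof.
move=> GD FG nm; apply: lb_le_inf.
  by have [p p_feas] := feasible_neq0 m GD; exists '[p], p.
by move=> _ [p p_feas <-]; apply/feasible_inf_le/(feasible_anti FG nm).
Qed.

Lemma feasible_inf_adherent F n e : inD F -> 0 < e ->
  exists2 p, feasible F n p & '[p] < feasible_inf F n + e.
Proof.
move=> FD e_gt0; have [p0 p0_feas] := feasible_neq0 n FD.
have inf_ex : has_inf [set '[p] | p in feasible F n].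
  by split; [exists '[p0], p0 | exists 0 => _ [q _ <-]; exact: ip_ge0].
by have [_ [p p_feas <-] ?] := inf_adherent e_gt0 inf_ex; exists p.
Qed.

Lemma feasible_near_inf_close F n s delta p q :
  s - delta <= feasible_inf F n -> feasible F n p -> feasible F n q ->
  '[p] <= s + delta -> '[q] <= s + delta -> '[p - q] <= 8 * delta.
Proof.
move=> inf_ge p_feas q_feas p_le q_le.
have := feasible_inf_le (feasible_midpoint p_feas q_feas).
rewrite sqn_midpoint; lra.
Qed.

Lemma feasible_inf_bounded x0 F n : D x0 -> inD F ->
  feasible_inf F n <= 2 * ('[z - x0] + 1) + 2 * '[N x0].
Proof.
move=> Dx0 FD.
have x0FD : inD (x0 :: F) by move=> x; rewrite inE => /predU1P[->|/FD].
have [q q_feas] := feasible_neq0 n x0FD.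
have F_sub : {subset F <= x0 :: F} by move=> x xF; rewrite inE xF orbT.
apply: le_trans (feasible_inf_le (feasible_anti F_sub (leqnn n) q_feas)) _.
have := q_feas x0 (mem_head _ _); have := sqn_triangle2 q (N x0) 0.
by rewrite !subr0; have := @eps_le1 R n; lra.
Qed.

Definition feasible_infs : set R :=
  [set r | exists F n, inD F /\ feasible_inf F n = r].

Lemma has_sup_feasible_infs : D !=set0 -> has_sup feasible_infs.
Proof.
case=> x0 Dx0; split; first by exists (feasible_inf [::] 0), [::], 0%N.
exists (2 * ('[z - x0] + 1) + 2 * '[N x0]) => _ [F [n [FD <-]]].
exact: feasible_inf_bounded.
Qed.

Fixpoint cumul (c : nat -> seq V * nat) n : seq V * nat :=
  if n is m.+1 then ((cumul c m).1 ++ (c n).1, maxn (maxn (cumul c m).2 (c n).2) n)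
  else c 0%N.

Lemma cumul_mono c n m : (n <= m)%N ->
  {subset (cumul c n).1 <= (cumul c m).1} /\ ((cumul c n).2 <= (cumul c m).2)%N.
Proof.
elim: m => [|m IH]; first by rewrite leqn0 => /eqP ->; split.
rewrite leq_eqVlt ltnS => /predU1P[->|/IH[sub le]]; first by split.
split=> [x /sub xF|] /=.
  by rewrite mem_cat xF.
by rewrite (leq_trans le) // (leq_trans (leq_maxl _ (c m.+1).2)) ?leq_maxl.
Qed.

Lemma cumul_ge c n :
  [/\ {subset (c n).1 <= (cumul c n).1}, ((c n).2 <= (cumul c n).2)%N
    & (n <= (cumul c n).2)%N].
Proof.
case: n => [|n] /=; first by split.
split=> [x xc||]; first by rewrite mem_cat xc orbT.
  by rewrite (leq_trans (leq_maxr (cumul c n).2 _)) ?leq_maxl.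
by rewrite leq_maxr.
Qed.

Lemma cumul_inD c n : (forall m, inD (c m).1) -> inD (cumul c n).1.
Proof.
move=> cD; elim: n => [|n IH] //= x.
by rewrite mem_cat => /orP[/IH|/cD].
Qed.

Lemma one_point_extension : D !=set0 ->
  exists w, forall x, D x -> '[w - N x] <= '[z - x].
Proof.
move=> D_neq0; have S_sup := has_sup_feasible_infs D_neq0.
set s := sup feasible_infs.
have inf_le_s F n : inD F -> feasible_inf F n <= s.
  by move=> FD; apply: sup_upper_bound => //; exists F, n.
have c_ex n : exists c : seq V * nat, inD c.1 /\ s - eps n < feasible_inf c.1 c.2.
  by have [_ [F [m [FD <-]]] ?] := sup_adherent (eps_gt0 n) S_sup; exists (F, m).
have [c c_near] := choice c_ex.
pose F n := (cumul c n).1; pose m n := (cumul c n).2.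
have FD n : inD (F n) by apply: cumul_inD => k; case: (c_near k).
have F_near n : s - eps n <= feasible_inf (F n) (m n).
  have [cF cm _] := cumul_ge c n.
  exact/ltW/(lt_le_trans (c_near n).2)/feasible_inf_mono.
have p_ex n : exists p, feasible (F n) (m n) p /\ '[p] <= s + eps n.
  have [p p_feas p_lt] := feasible_inf_adherent (m n) (FD n) (eps_gt0 n).
  by exists p; split=> //; have := inf_le_s _ (m n) (FD n); lra.
have [p p_near] := choice p_ex.
have close n G k q : {subset F n <= G} -> (m n <= k)%N -> feasible G k q ->
    '[q] <= s + eps n -> '[p n - q] <= 8 * eps n.
  move=> FG mk q_feas q_le.
  apply: (feasible_near_inf_close (F_near n) (p_near n).1 _ (p_near n).2 q_le).
  exact: feasible_anti q_feas.
have [l p_lim] : exists l, forall n, '[p n - l] <= 8 * eps n.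
  apply: cauchy_rate_lim => [|n n' nn']; first exact: ler0n.
  have [Fnn' mnn'] := cumul_mono c nn'.
  apply: close Fnn' mnn' (p_near n').1 _.
  by have := (p_near n').2; have := eps_le (R := R) nn'; lra.
exists l => x Dx; rewrite sqnBC; apply: (sqn_le_of_near (c := 32)) => // n.
have xFD : inD (x :: F n) by move=> y; rewrite inE => /predU1P[->|/FD].
have [q q_feas q_lt] := feasible_inf_adherent (m n) xFD (eps_gt0 n).
have q_le : '[q] <= s + eps n by have := inf_le_s _ (m n) xFD; lra.
have F_sub : {subset F n <= x :: F n} by move=> y yF; rewrite inE yF orbT.
have p_q := close n _ _ _ F_sub (leqnn _) q_feas q_le.
exists q; split.
  rewrite sqnBC; apply: le_trans (q_feas x (mem_head _ _)) _.
  by rewrite lerD2l eps_le //; case: (cumul_ge c n).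
by have := sqn_triangle2 q (p n) l; rewrite (sqnBC q (p n)); have := p_lim n; lra.
Qed.

End OnePointExtension.

Section Resolvent.
Variables (D : set V) (T : V -> V) (alpha : R).
Hypothesis alpha_gt0 : 0 < alpha.

Let rho := (2 * alpha)^-1 - 1.
Let A := sub_id (setinv D T).

Definition nonexp_part (s t : V) := alpha^-1 *: (t - (1 - alpha) *: s).

Lemma comonotone_gap a b :
  '[b, a - b] - rho * '[a - b] = alpha / 2 * ('[a] - '[nonexp_part a b]).
Proof. by rewrite /rho !ipE (ip_sym Hip b a); field; rewrite gt_eqF. Qed.

Lemma comonotone_pairE s t s' t' :
  rho * ipnorm ip ((s - t) - (s' - t')) ^+ 2 <= '[t - t', (s - t) - (s' - t')]
  <-> '[nonexp_part s t - nonexp_part s' t'] <= '[s - s'].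
Proof.
have sub_swap (a b c e : V) : (a - b) - (c - e) = (a - c) - (b - e).
  by rewrite !opprB addrACA [RHS]addrACA [- b + _]addrC.
have -> : nonexp_part s t - nonexp_part s' t' = nonexp_part (s - s') (t - t').
  by rewrite -scalerBr sub_swap -scalerBr.
have half_gt0 : 0 < alpha / 2 by rewrite divr_gt0.
rewrite ipnorm_sqr sub_swap -[in X in _ <-> X]subr_ge0 -(pmulr_rge0 _ half_gt0).
by rewrite -comonotone_gap subr_ge0.
Qed.

Lemma comonotoneE (B : V -> set V) : comonotone ip rho B <->
  forall s t s' t', B t (s - t) -> B t' (s' - t') ->
    '[nonexp_part s t - nonexp_part s' t'] <= '[s - s'].
Proof.
split=> [B_comon s t s' t' Bst Bst'|B_ne x u y v Bxu Byv].
  exact/comonotone_pairE/B_comon.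
by rewrite -[u](addrK x) -[v](addrK y); apply/comonotone_pairE/B_ne; rewrite addrK.
Qed.

Lemma comonotoneP : comonotone ip rho A <->
  forall x y, D x -> D y ->
    '[nonexp_part x (T x) - nonexp_part y (T y)] <= '[x - y].
Proof.
split=> [/comonotoneE A_ne x y Dx Dy|N_ne].
  by apply: A_ne; apply/sub_id_setinvE.
apply/comonotoneE => s t s' t' /sub_id_setinvE[Ds <-] /sub_id_setinvE[Ds' <-].
exact: N_ne.
Qed.

Lemma conicP : conically_nonexpansive ip D alpha T <->
  forall x y, D x -> D y ->
    '[nonexp_part x (T x) - nonexp_part y (T y)] <= '[x - y].
Proof.
split=> [[_ [N [N_ne TN]]] x y Dx Dy|Nx_ne].
  have NE w : D w -> nonexp_part w (T w) = N w.
    by move=> Dw; rewrite /nonexp_part TN // addrC addKr scalerA mulVf ?gt_eqF // scale1r.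
  by rewrite !NE // -ler_ipnorm; exact: N_ne.
split=> //; exists (fun x => nonexp_part x (T x)); split=> [x y Dx Dy|x _].
  by rewrite ler_ipnorm; exact: Nx_ne.
by rewrite /nonexp_part scalerA mulfV ?gt_eqF // scale1r addrC subrK.
Qed.

Lemma conic_comonotone : conically_nonexpansive ip D alpha T <-> comonotone ip rho A.
Proof. by split=> [/conicP/comonotoneP|/comonotoneP/conicP]. Qed.

Lemma max_comonotone_of_total : D = setT -> conically_nonexpansive ip D alpha T ->
  max_comonotone ip rho A.
Proof.
move=> D_total T_conic; split=> [|B B_comon AB x u Bxu]; first exact/conic_comonotone.
pose s := x + u.
have A_s : A (T s) (s - T s) by apply/sub_id_setinvE; rewrite D_total.
have inv_gt0 : 0 < (2 * alpha)^-1 by rewrite invr_gt0 mulr_gt0.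
have rho_gt : -1 < rho by rewrite /rho; lra.
have u_eq : u = s - T s.
  apply: (comonotone_pair_eq rho_gt _ (B_comon _ _ _ _ Bxu (AB _ _ A_s))).
  by rewrite subrKC.
have x_eq : x = T s by rewrite -[x](addrK u) -/s u_eq subKr.
by rewrite u_eq x_eq.
Qed.

Lemma total_of_max_comonotone : D !=set0 -> max_comonotone ip rho A -> D = setT.
Proof.
move=> D_neq0 [A_comon A_max]; apply/seteqP; split=> // z _.
have [w w_ext] := one_point_extension (N := fun x => nonexp_part x (T x)) z
  (comonotoneP.1 A_comon) D_neq0.
pose t := (1 - alpha) *: z + alpha *: w.
have np_zt : nonexp_part z t = w.
  by rewrite /nonexp_part addrC addKr scalerA mulVf ?gt_eqF // scale1r.
pose B t' u := A t' u \/ (t' = t /\ u = z - t).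
have B_cases s t' : B t' (s - t') -> (D s /\ T s = t') \/ (s = z /\ t' = t).
  by case=> [/sub_id_setinvE|[-> /addIr ->]]; [left | right].
have B_comon : comonotone ip rho B.
  apply/comonotoneE => s1 t1 s2 t2.
  move=> /B_cases[[D1 <-]|[-> ->]] /B_cases[[D2 <-]|[-> ->]].
  - exact: (comonotoneP.1 A_comon).
  - by rewrite np_zt (sqnBC (nonexp_part _ _)) (sqnBC s1); exact: w_ext _ D1.
  - by rewrite np_zt; exact: w_ext _ D2.
  - by rewrite !subrr.
have A_sub_B x : A x `<=` B x by move=> u; left.
have := A_max B B_comon A_sub_B t (z - t) (or_intror (conj erefl erefl)).
by case/sub_id_setinvE.
Qed.

Lemma conic_total_max_comonotone : D !=set0 ->
  (conically_nonexpansive ip D alpha T /\ D = setT) <-> max_comonotone ip rho A.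
Proof.
move=> D_neq0; split=> [[T_conic D_total]|A_max]; first exact: max_comonotone_of_total.
split; last exact: total_of_max_comonotone.
by apply/conic_comonotone; case: A_max.
Qed.

End Resolvent.

End InnerProduct.

Theorem proposition3p9 (R : realType) (V : lmodType R) (ip : V -> V -> R)
  (Hip : is_hilbert ip) (D : set V) (T : V -> V) (alpha : R) :
  D !=set0 -> 0 < alpha ->
  let A := sub_id (setinv D T) in
  let rho := (2 * alpha)^-1 - 1 in
  (conically_nonexpansive ip D alpha T <-> comonotone ip rho A) /\
  ((conically_nonexpansive ip D alpha T /\ D = setT) <-> max_comonotone ip rho A) /\
  (nonexpansive ip D T <-> comonotone ip (- 2^-1) A) /\
  ((nonexpansive ip D T /\ D = setT) <-> max_comonotone ip (- 2^-1) A) /\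
  (alpha < 1 ->
    (averaged ip D alpha T <-> comonotone ip rho A) /\
    ((averaged ip D alpha T /\ D = setT) <-> max_comonotone ip rho A)).
Proof.
move=> D_neq0 alpha_gt0 A rho.
have rho1 : (2 * 1)^-1 - 1 = - 2^-1 :> R by rewrite mulr1; field.
have := conic_comonotone Hip D T (@ltr01 R); rewrite rho1 => conic1.
have := conic_total_max_comonotone Hip T (@ltr01 R) D_neq0; rewrite rho1 => conic1_max.
have ne_conic1 := nonexpansive_conic1 ip D T.
split; first exact: conic_comonotone.
split; first exact: conic_total_max_comonotone.
split; first exact: iff_trans ne_conic1 conic1.
split; first exact: iff_trans (and_iff_compat_r _ ne_conic1) conic1_max.
move=> alpha_lt1; have av := averaged_conic ip D T (introT andP (conj alpha_gt0 alpha_lt1)).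
split; first exact: iff_trans av (conic_comonotone _ _ _ _).
exact: iff_trans (and_iff_compat_r _ av) (conic_total_max_comonotone _ _ _ _).
Qed.
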